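(* Let $N_\nu=2^{n_\nu}$ with $n_\nu\ge1$, let $\mathbf{g}=(g_0,\ldots,g_m)$ with $g_0=1$, $m\ge 1$, and let $\mathbf{s}\in\mathrm{GF}(2)^m$. Let $\boldsymbol{\eta}$ be the output of $\mathrm{convTrans}(\mathbf{0},\mathbf{g},\mathbf{s})$ and $\boldsymbol{\eta}_c=\boldsymbol{\eta}\mathbf{F}^{\otimes n_\nu}$. Then $$\{\mathbf{u}(\mathbf{v})\mathbf{F}^{\otimes n_\nu} : \mathbf{v}\in\mathrm{GF}(2)^{N_\nu},\ v_0=0\}=\{\mathbf{c}+\boldsymbol{\eta}_c : \mathbf{c}\in\mathrm{GF}(2)^{N_\nu},\ \textstyle\sum_{j=0}^{N_\nu-1}c_j=0\},$$ where $\mathbf{u}(\mathbf{v})$ is the output of $\mathrm{convTrans}(\mathbf{v},\mathbf{g},\mathbf{s})$; i.e., the set of possible node outputs is a coset of the single parity check code shifted by $\boldsymbol{\eta}_c$.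
   Context: All arithmetic is over $\mathrm{GF}(2)$. $\mathbf{F}=\begin{bmatrix}1&0\\1&1\end{bmatrix}$ and $\mathbf{F}^{\otimes n}$ is its $n$-fold Kronecker power. The function $\mathrm{convTrans}(\mathbf{v},\mathbf{g},\mathbf{s})$ processes $v_0,\ldots,v_{N-1}$ in order starting from state $\mathbf{s}=(s_0,\ldots,s_{m-1})$: for input bit $v$ and current state $\mathbf{s}$ it outputs $u=g_0v+\sum_{i=1}^m g_i s_{i-1}$ and moves to the state $(v,s_0,\ldots,s_{m-2})$; it returns $\mathbf{u}=(u_0,\ldots,u_{N-1})$ and the final state. *)

From HB Require Import structures.
From mathcomp Require Import all_boot all_order all_algebra.
Set Implicit Arguments. Unset Strict Implicit. Unset Printing Implicit Defensive.
Import Order.TTheory GRing.Theory.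
Local Open Scope ring_scope.

(* Entry of a matrix at natural-number indices (0 outside the range). *)
Definition mx_at (R : nmodType) m n (A : 'M[R]_(m, n)) (i j : nat) : R :=
  match @insub _ (fun k => k < m)%N 'I_m i, @insub _ (fun k => k < n)%N 'I_n j with
  | Some i', Some j' => A i' j'
  | _, _ => 0
  end.

Definition kron (R : pzRingType) m1 n1 m2 n2 (A : 'M[R]_(m1, n1)) (B : 'M[R]_(m2, n2))
  : 'M[R]_(m1 * m2, n1 * n2) :=
  \matrix_(i, j) (mx_at A (i %/ m2) (j %/ n2) * mx_at B (i %% m2) (j %% n2)).

Definition Fker : 'M['F_2]_2 := \matrix_(i < 2, j < 2) (if (j <= i)%N then 1 else 0).

Fixpoint Fpow (n : nat) : 'M['F_2]_(2 ^ n) :=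
  match n with
  | 0 => 1%:M
  | n'.+1 => castmx (esym (expnS 2 n'), esym (expnS 2 n')) (kron Fker (Fpow n'))
  end.

(* convTrans(v, g, s): g = (g_0,...,g_m) as a sequence of length m+1,
   state s = (s_0,...,s_{m-1}) as a sequence of length m.  For input bit x and
   state s it outputs g_0 x + sum_{i=1}^m g_i s_{i-1} and moves to the state
   (x, s_0, ..., s_{m-2}) = belast x s. *)
Fixpoint convTrans (g v s : seq 'F_2) : seq 'F_2 * seq 'F_2 :=
  match v with
  | [::] => ([::], s)
  | x :: v' =>
      let u := nth 0 g 0 * x + \sum_(i < size s) nth 0 g i.+1 * nth 0 s i in
      let r := convTrans g v' (belast x s) in
      (u :: r.1, r.2)
  end.

Definition rv2seq N (v : 'rV['F_2]_N) : seq 'F_2 := [seq v 0 j | j <- enum 'I_N].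
Definition seq2rv N (s : seq 'F_2) : 'rV['F_2]_N := \row_(j < N) nth 0 s j.

Definition convOut N (g s : seq 'F_2) (v : 'rV['F_2]_N) : 'rV['F_2]_N :=
  seq2rv N (convTrans g (rv2seq v) s).1.

Lemma pow2_gt0 n : (0 < 2 ^ n)%N.
Proof. by rewrite expn_gt0. Qed.

Definition idx0 n : 'I_(2 ^ n) := Ordinal (pow2_gt0 n).

(* The map v |-> u(v) is affine: u(v) = L v + eta, where L is linear and lower
   unitriangular because g_0 = 1, hence a bijection of GF(2)^N fixing the first
   coordinate.  Over GF(2) the matrix F^{(x)n} is an involution and its k-th row
   sums to [k == 0], so the coordinate sum of w F^{(x)n} is w_0.  Therefore
   w |-> w F^{(x)n} maps {w | w_0 = 0} onto the single parity check code, and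
   u(v) F^{(x)n} = (L v) F^{(x)n} + eta_c ranges over its translate by eta_c. *)
From mathcomp Require Import all_boot all_order all_algebra zify.
Import GRing.Theory.
Local Open Scope ring_scope.

Lemma mx_atE (R : nmodType) m n (A : 'M[R]_(m, n)) (i : 'I_m) (j : 'I_n) :
  mx_at A i j = A i j.
Proof. by rewrite /mx_at !valK. Qed.

Lemma mx_at_outl (R : nmodType) m n (A : 'M[R]_(m, n)) i j :
  (m <= i)%N -> mx_at A i j = 0.
Proof. by move=> h; rewrite /mx_at insubF // ltnNge h. Qed.

Lemma mx_at_outr (R : nmodType) m n (A : 'M[R]_(m, n)) i j :
  (n <= j)%N -> mx_at A i j = 0.
Proof.
move=> h; rewrite /mx_at (insubF 'I_n (_ : (j < n)%N = false)) ?ltnNge ?h //.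
by case: insub.
Qed.

Lemma mx_at_kron (R : pzRingType) m1 n1 m2 n2
    (A : 'M[R]_(m1, n1)) (B : 'M[R]_(m2, n2)) i j :
  mx_at (kron A B) i j =
  mx_at A (i %/ m2) (j %/ n2) * mx_at B (i %% m2) (j %% n2).
Proof.
have [hi|hi] := ltnP i (m1 * m2); last first.
  rewrite mx_at_outl //; have [m2_0|m2_gt0] := posnP m2.
    by rewrite [mx_at B _ _]mx_at_outl ?mulr0 // m2_0.
  by rewrite mx_at_outl ?mul0r // leq_divRL.
have [hj|hj] := ltnP j (n1 * n2); last first.
  rewrite mx_at_outr //; have [n2_0|n2_gt0] := posnP n2.
    by rewrite [mx_at B _ _]mx_at_outr ?mulr0 // n2_0.
  by rewrite [mx_at A _ _]mx_at_outr ?mul0r // leq_divRL.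
by rewrite -[i]/(val (Ordinal hi)) -[j]/(val (Ordinal hj)) mx_atE mxE.
Qed.

Lemma big_nat_mul_split (R : nmodType) (f : nat -> R) a N :
  \sum_(0 <= k < a * N) f k = \sum_(0 <= x < a) \sum_(0 <= y < N) f (x * N + y)%N.
Proof.
elim: a => [|a IH]; first by rewrite mul0n !big_geq.
rewrite big_nat_recr //= -IH mulSnr (big_cat_nat _ (leq_addr _ _)) //=.
congr (_ + _); rewrite -{1}(add0n (a * N)%N) big_addn addKn.
by apply: eq_bigr => y _; rewrite addnC.
Qed.

Lemma sum_kron_row (R : comPzRingType) m1 n1 m2 n2
    (A : 'M[R]_(m1, n1)) (B : 'M[R]_(m2, n2)) (a b : nat -> R) i :
  \sum_(0 <= k < n1 * n2) mx_at (kron A B) i k * (a (k %/ n2)%N * b (k %% n2)%N) =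
  (\sum_(0 <= x < n1) mx_at A (i %/ m2) x * a x) *
  (\sum_(0 <= y < n2) mx_at B (i %% m2) y * b y).
Proof.
rewrite big_nat_mul_split mulr_suml; apply: eq_bigr => x _; rewrite mulr_sumr.
apply: eq_big_nat => y /andP [_ hy].
have n2_gt0 : (0 < n2)%N by apply: leq_ltn_trans hy.
rewrite mx_at_kron divnMDl // modnMDl (divn_small hy) (modn_small hy) addn0.
by rewrite mulrACA.
Qed.

Lemma mx_at_Fker i j : mx_at Fker i j = ((i < 2) && (j <= i))%N%:R.
Proof.
have [hi|hi] := ltnP i 2; last by rewrite mx_at_outl.
have [hj|hj] := ltnP j 2; last first.
  by rewrite mx_at_outr // leqNgt (leq_trans hi hj) andbF.
by rewrite -[i]/(val (Ordinal hi)) -[j]/(val (Ordinal hj)) mx_atE mxE /=; case: leqP.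
Qed.

Lemma mx_at_Fpow0 i j : mx_at (Fpow 0) i j = ((i == 0) && (j == 0))%N%:R.
Proof.
case: i => [|i]; last by rewrite mx_at_outl.
case: j => [|j]; last by rewrite mx_at_outr.
by rewrite -[0%N]/(val (ord0 : 'I_1)) mx_atE mxE.
Qed.

Lemma mx_at_FpowS n i j : mx_at (Fpow n.+1) i j = mx_at (kron Fker (Fpow n)) i j.
Proof.
have [hi|hi] := ltnP i (2 ^ n.+1); last by rewrite !mx_at_outl // -expnS.
have [hj|hj] := ltnP j (2 ^ n.+1); last by rewrite !mx_at_outr // -expnS.
by rewrite -[i]/(val (Ordinal hi)) -[j]/(val (Ordinal hj)) mx_atE /= castmxE -mx_atE.
Qed.

Lemma eqn_divmod (d i j : nat) : (0 < d)%N ->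
  (i == j) = ((i %/ d == j %/ d) && (i %% d == j %% d))%N.
Proof.
move=> d_gt0; apply/eqP/andP => [->|[/eqP qE /eqP rE]]; first by [].
by rewrite (divn_eq i d) (divn_eq j d) qE rE.
Qed.

Lemma Fpow_sq_at n i j :
  \sum_(0 <= k < 2 ^ n) mx_at (Fpow n) i k * mx_at (Fpow n) k j =
  ((i == j) && (i < 2 ^ n))%N%:R.
Proof.
elim: n i j => [|n IH] i j.
  rewrite big_nat1 !mx_at_Fpow0.
  by case: i => [|i]; case: j => [|j]; rewrite ?mul1r ?mul0r ?mulr0 ?ltnS ?andbF.
have d_gt0 : (0 < 2 ^ n)%N by rewrite expn_gt0.
under eq_bigr do rewrite !mx_at_FpowS [X in _ * X]mx_at_kron.
rewrite expnS (@sum_kron_row _ _ _ _ _ _ _ (fun x => mx_at Fker x (j %/ 2 ^ n))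
  (fun y => mx_at (Fpow n) y (j %% 2 ^ n))) IH.
have -> (x y : nat) : \sum_(0 <= z < 2) mx_at Fker x z * mx_at Fker z y
    = ((x == y) && (x < 2))%N%:R.
  rewrite !big_nat_recl // big_geq // addr0 !mx_at_Fker.
  case: x => [|[|x]]; case: y => [|[|y]] => /=;
    by rewrite ?(mul1r, mul0r, mulr0, mulr1, addr0, add0r) ?andbF //; apply/eqP.
rewrite -natrM mulnb (ltn_pmod i d_gt0) andbT (eqn_divmod _ i j d_gt0).
by rewrite ltn_divLR // mulnC andbAC.
Qed.

Lemma Fpow_row_sum_at n i :
  \sum_(0 <= k < 2 ^ n) mx_at (Fpow n) i k = (i == 0)%N%:R.
Proof.
elim: n i => [|n IH] i; first by rewrite big_nat1 mx_at_Fpow0 andbT.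
have d_gt0 : (0 < 2 ^ n)%N by rewrite expn_gt0.
transitivity (\sum_(0 <= k < 2 ^ n.+1)
    mx_at (kron Fker (Fpow n)) i k * ((fun=> 1) (k %/ 2 ^ n)%N * (fun=> 1) (k %% 2 ^ n)%N)).
  by apply: eq_bigr => k _; rewrite mx_at_FpowS !mulr1.
rewrite expnS (@sum_kron_row _ _ _ _ _ _ _ (fun=> 1) (fun=> 1)).
under [X in _ * X]eq_bigr do rewrite mulr1.
have -> (x : nat) : \sum_(0 <= z < 2) mx_at Fker x z * 1 = (x == 0)%N%:R.
  rewrite !big_nat_recl // big_geq // addr0 !mx_at_Fker.
  by case: x => [|[|x]] => /=; rewrite ?(mulr1, addr0) ?andbF //; apply/eqP.
by rewrite IH -natrM mulnb (eqn_divmod _ i 0 d_gt0) div0n mod0n.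
Qed.

Lemma Fpow_sq n : Fpow n *m Fpow n = 1%:M.
Proof.
apply/matrixP => i j; rewrite !mxE.
transitivity (\sum_(k < 2 ^ n) mx_at (Fpow n) i k * mx_at (Fpow n) k j).
  by apply: eq_bigr => k _; rewrite !mx_atE.
by have := Fpow_sq_at n i j; rewrite big_mkord ltn_ord andbT => ->.
Qed.

Lemma Fpow_row_sum n (k : 'I_(2 ^ n)) : \sum_(j < 2 ^ n) Fpow n k j = (val k == 0)%N%:R.
Proof.
transitivity (\sum_(j < 2 ^ n) mx_at (Fpow n) k j).
  by apply: eq_bigr => j _; rewrite !mx_atE.
by have := Fpow_row_sum_at n k; rewrite big_mkord => ->.
Qed.

Lemma sum_mulmx_Fpow n (w : 'rV['F_2]_(2 ^ n)) :
  \sum_(j < 2 ^ n) (w *m Fpow n) 0 j = w 0 (idx0 n).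
Proof.
under eq_bigr do rewrite mxE.
rewrite exchange_big /=; under eq_bigr do rewrite -mulr_sumr Fpow_row_sum.
rewrite (bigD1 (idx0 n)) //= mulr1 big1 ?addr0 // => k k_neq0.
rewrite (_ : val k == 0 = false) ?mulr0 //.
by apply: contraNF k_neq0 => /eqP k0; apply/eqP/val_inj.
Qed.

Lemma Fpow_image_parity n :
  [set w *m Fpow n | w in [set w : 'rV['F_2]_(2 ^ n) | w 0 (idx0 n) == 0]] =
  [set c : 'rV['F_2]_(2 ^ n) | \sum_(j < 2 ^ n) c 0 j == 0].
Proof.
apply/setP => c; rewrite inE; apply/imsetP/idP => [[w]|c_par].
  by rewrite inE => w0 ->; rewrite sum_mulmx_Fpow.
exists (c *m Fpow n); last by rewrite -mulmxA Fpow_sq mulmx1.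
by rewrite inE -sum_mulmx_Fpow -mulmxA Fpow_sq mulmx1.
Qed.

Lemma nth_belast (x : 'F_2) s j : (j < size s)%N ->
  nth 0 (belast x s) j = nth 0 (x :: s) j.
Proof. by move=> h; rewrite [in RHS](lastI x s) nth_rcons size_belast h. Qed.

(* Output k sees input bit k - i - 1 through tap g_{i+1} while i < k, and the
   initial state entry s_{i-k} once the tap reaches past the start of v. *)
Lemma nth_convTrans g v s k : (k < size v)%N ->
  nth 0 (convTrans g v s).1 k = nth 0 g 0 * nth 0 v k +
    \sum_(i < size s) nth 0 g i.+1 *
      (if (i < k)%N then nth 0 v (k - i.+1) else nth 0 s (i - k)).
Proof.
elim: v s k => [|x v IH] s [|k] //= hk.
  by congr (_ + _); apply: eq_bigr => i _; rewrite subn0.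
rewrite IH // size_belast /=; congr (_ + _); apply: eq_bigr => i _.
have hi := ltn_ord i.
case: (ltngtP i k) => h.
- by rewrite ltnS (ltnW h) subSS -(subnSK h).
- rewrite ltnS leqNgt h /= nth_belast; last by lia.
  by rewrite -(subnSK h).
- by rewrite -h ltnSn subnn nth_belast ?subnn //; lia.
Qed.

Lemma mxBE (R : zmodType) m n (A B : 'M[R]_(m, n)) i j : (A - B) i j = A i j - B i j.
Proof. by rewrite !mxE. Qed.

Definition rv_nth {N} (v : 'rV['F_2]_N) t := nth 0 (rv2seq v) t.

Lemma rv_nthE N (v : 'rV['F_2]_N) (j : 'I_N) : rv_nth v j = v 0 j.
Proof. by rewrite /rv_nth /rv2seq (nth_map j) ?size_enum_ord // nth_ord_enum. Qed.

Lemma rv_nth_out N (v : 'rV['F_2]_N) t : (N <= t)%N -> rv_nth v t = 0.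
Proof. by move=> h; rewrite /rv_nth nth_default // size_map size_enum_ord. Qed.

Lemma rv_nthB N (v w : 'rV['F_2]_N) t : rv_nth (v - w) t = rv_nth v t - rv_nth w t.
Proof.
have [h|h] := ltnP t N; last by rewrite !rv_nth_out // subr0.
by rewrite -[t]/(val (Ordinal h)) !rv_nthE !mxE.
Qed.

Lemma rv_nth0 N t : rv_nth (0 : 'rV['F_2]_N) t = 0.
Proof. by rewrite -(subrr 0) rv_nthB subrr. Qed.

Section ConvolutionalTransform.

Variables (g s : seq 'F_2) (N : nat).
Hypothesis g0 : nth 0 g 0 = 1.

Lemma convOutE (v : 'rV['F_2]_N) (k : 'I_N) :
  convOut g s v 0 k = v 0 k +
    \sum_(i < size s) nth 0 g i.+1 *
      (if (i < k)%N then rv_nth v (k - i.+1) else nth 0 s (i - k)).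
Proof.
rewrite /convOut mxE nth_convTrans; last by rewrite size_map size_enum_ord.
by rewrite g0 mul1r -rv_nthE.
Qed.

Definition convLin (v : 'rV['F_2]_N) := convOut g s v - convOut g s 0.

Lemma convLinE (v : 'rV['F_2]_N) (k : 'I_N) :
  convLin v 0 k = v 0 k +
    \sum_(i < size s) nth 0 g i.+1 * (if (i < k)%N then rv_nth v (k - i.+1) else 0).
Proof.
rewrite mxE [X in _ + X]mxE !convOutE [(0 : 'rV_N) 0 k]mxE add0r.
rewrite -addrA -sumrB; congr (_ + _).
apply: eq_bigr => i _; rewrite rv_nth0.
by case: ifP => _; rewrite ?mulr0 ?subr0 ?subrr.
Qed.

Lemma convLinB (v w : 'rV['F_2]_N) : convLin (v - w) = convLin v - convLin w.
Proof.
apply/rowP => k; rewrite convLinE [RHS]mxBE !convLinE mxBE opprD addrACA -sumrB.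
congr (_ + _); apply: eq_bigr => i _; rewrite rv_nthB.
by case: ifP => _; rewrite ?mulrBr ?mulr0 ?subr0.
Qed.

Lemma convLin_first (v : 'rV['F_2]_N) (k : 'I_N) : val k = 0%N ->
  convLin v 0 k = v 0 k.
Proof.
by move=> k0; rewrite convLinE k0 big1 ?addr0 // => i _; rewrite ltn0 mulr0.
Qed.

(* A vector with zero image vanishes, by strong induction on the position:
   coordinate t of its image is v_t plus taps on earlier coordinates. *)
Lemma convLin_inj : injective convLin.
Proof.
move=> v w vw.
have d0 : convLin (v - w) = 0 by rewrite convLinB vw subrr.
have dz t : rv_nth (v - w) t = 0.
  elim/ltn_ind: t => t IH; have [ht|ht] := ltnP t N; last by rewrite rv_nth_out.
  have := congr1 (fun M : 'rV_N => M 0 (Ordinal ht)) d0.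
  rewrite /= convLinE big1 ?addr0 => [dt|i _].
    by rewrite -[t]/(val (Ordinal ht)) rv_nthE dt mxE.
  by case: ifP => /= hi; rewrite ?mulr0 // IH ?mulr0 //; lia.
by apply/rowP => j; apply/eqP; rewrite -subr_eq0 -mxBE -rv_nthE dz.
Qed.

Lemma convLin_image_first (k0 : 'I_N) : val k0 = 0%N ->
  [set convLin v | v in [set v : 'rV['F_2]_N | v 0 k0 == 0]] =
  [set w : 'rV['F_2]_N | w 0 k0 == 0].
Proof.
move=> k0E; have [inv _ convLinK] := injF_bij convLin_inj.
apply/setP => w; rewrite inE; apply/imsetP/idP => [[v]|w0].
  by rewrite inE => v0 ->; rewrite convLin_first.
by exists (inv w); rewrite ?convLinK // inE -convLin_first // convLinK.
Qed.

End ConvolutionalTransform.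

Arguments convLin g s {N} v.

Theorem mainTheorem4 (n m : nat) (g s : seq 'F_2) :
  (1 <= n)%N -> (1 <= m)%N -> size g = m.+1 -> nth 0 g 0 = 1 -> size s = m ->
  let eta_c : 'rV['F_2]_(2 ^ n) := convOut g s 0 *m Fpow n in
  [set convOut g s v *m Fpow n | v in [set v : 'rV['F_2]_(2 ^ n) | v 0 (idx0 n) == 0]]
  = [set c + eta_c | c in [set c : 'rV['F_2]_(2 ^ n) | \sum_(j < 2 ^ n) c 0 j == 0]].
Proof.
move=> _ _ _ g0 _ eta_c.
have convOut_affine v : convOut g s v *m Fpow n = convLin g s v *m Fpow n + eta_c.
  by rewrite /convLin -mulmxDl subrK.
rewrite -Fpow_image_parity -[in RHS](@convLin_image_first g s _ g0 (idx0 n)); last by [].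
by rewrite -!imset_comp; apply: eq_imset => v; rewrite /= convOut_affine.
Qed.
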